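(* Let $V$ be a finite set of truth values with a partial order $\leq$ having $0$ as least and $1$ as greatest element, and let $\models_{\leq}$ be the associated order-theoretic truth-relation (constant expressive semantics). Then every regular connective for $\models_{\leq}$ shares a regularity rule with some classical connective.
   Context: $\gamma\models_{\leq}\delta$ iff ($\exists x\in\gamma,\exists y\in\delta: x\leq y$) or $0\in\gamma$ or $1\in\delta$. Semantics: valuations mapping atoms to $V$, connectives interpreted by fixed truth functions, extended compositionally, every assignment to finitely many distinct atoms realized; constant expressive: every value is the constant value of some formula. $\Gamma\vdash\Delta$ iff $v(\Gamma)\models_{\leq}v(\Delta)$ for all $v$. An $n$-ary connective $C$ is regular with rule $(\mathcal{B}^p,\mathcal{B}^c)$, $\mathcal{B}^p,\mathcal{B}^c\subseteq\mathcal{P}(\{1..n\})^2$, if for all $\Gamma,\Delta,F_1..F_n$: $\Gamma\cup\{C(\vec F)\}\vdash\Delta$ iff for all $(B_p,B_c)\in\mathcal{B}^p$, $\Gamma\cup\{F_i:i\in B_p\}\vdash\{F_i:i\in B_c\}\cup\Delta$; $\Gamma\vdash\{C(\vec F)\}\cup\Delta$ iff the same for all $(B_p,B_c)\in\mathcal{B}^c$. Classical logic: $V=\{0,1\}$ with the relation $\gamma\models\delta$ iff ($\gamma\subseteq\{1\}\Rightarrow 1\in\delta$); classical connectives are truth functions $\{0,1\}^n\to\{0,1\}$. Connectives share a regularity rule if some $(\mathcal{B}^p,\mathcal{B}^c)$ is satisfied by both in their respective logics. *)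

From mathcomp Require Import all_boot all_order.
Set Implicit Arguments.
Unset Strict Implicit.
Unset Printing Implicit Defensive.
Import Order.TTheory.
Local Open Scope order_scope.

Inductive form (S : Type) (ar : S -> nat) : Type :=
| Atom : nat -> form ar
| App : forall c : S, ('I_(ar c) -> form ar) -> form ar.

Fixpoint eval (V S : Type) (ar : S -> nat)
  (I : forall c : S, ('I_(ar c) -> V) -> V) (v : nat -> V) (F : form ar) : V :=
  match F with
  | Atom a => v a
  | App c args => I c (fun i => eval I v (args i))
  end.

Definition vimage (V S : Type) (ar : S -> nat)
  (I : forall c : S, ('I_(ar c) -> V) -> V) (v : nat -> V)
  (G : form ar -> Prop) : V -> Prop :=
  fun x => exists F, G F /\ eval I v F = x.

Definition entails (V S : Type) (ar : S -> nat)
  (I : forall c : S, ('I_(ar c) -> V) -> V)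
  (rel : (V -> Prop) -> (V -> Prop) -> Prop)
  (G D : form ar -> Prop) : Prop :=
  forall v : nat -> V, rel (vimage I v G) (vimage I v D).

Definition constant_expressive (V S : Type) (ar : S -> nat)
  (I : forall c : S, ('I_(ar c) -> V) -> V) : Prop :=
  forall x : V, exists F : form ar, forall v : nat -> V, eval I v F = x.

Definition ord_rel (d : Order.disp_t) (V : finTBPOrderType d)
  (g dl : V -> Prop) : Prop :=
  (exists x y, g x /\ dl y /\ x <= y) \/ g \bot \/ dl \top.

Definition cl_rel (g dl : bool -> Prop) : Prop :=
  (forall x, g x -> x = true) -> dl true.

Definition set_add (T : Type) (G : T -> Prop) (F : T) : T -> Prop :=
  fun X => G X \/ X = F.
Definition set_union (T : Type) (G D : T -> Prop) : T -> Prop :=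
  fun X => G X \/ D X.
Definition sel (T : Type) (n : nat) (Fs : 'I_n -> T) (B : {set 'I_n}) : T -> Prop :=
  fun X => exists2 i, i \in B & X = Fs i.

Definition rule_holds (T : Type) (ent : (T -> Prop) -> (T -> Prop) -> Prop)
  (n : nat) (C : ('I_n -> T) -> T)
  (Bp Bc : {set {set 'I_n} * {set 'I_n}}) : Prop :=
  forall (G D : T -> Prop) (Fs : 'I_n -> T),
    (ent (set_add G (C Fs)) D <->
       (forall B, B \in Bp -> ent (set_union G (sel Fs B.1)) (set_union (sel Fs B.2) D)))
    /\
    (ent G (set_add D (C Fs)) <->
       (forall B, B \in Bc -> ent (set_union G (sel Fs B.1)) (set_union (sel Fs B.2) D))).

Definition regular (T : Type) (ent : (T -> Prop) -> (T -> Prop) -> Prop)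
  (n : nat) (C : ('I_n -> T) -> T) : Prop :=
  exists Bp Bc, rule_holds ent C Bp Bc.

(* Classical logic: its connectives are all truth functions {0,1}^n -> {0,1}. *)
Definition cl_sig : Type := {n : nat & ('I_n -> bool) -> bool}.
Definition cl_ar (c : cl_sig) : nat := projT1 c.
Definition cl_int (c : cl_sig) : ('I_(cl_ar c) -> bool) -> bool := projT2 c.
Definition cl_entails := entails cl_int cl_rel.

From mathcomp Require Import all_boot all_order.
Import Order.TTheory.
Local Open Scope order_scope.
Set Implicit Arguments.
Unset Strict Implicit.

(* A pair B = (B1, B2) of a regularity rule reads classically as the term
   /\_{i in B1} x_i /\ /\_{j in B2} ~x_j, and a set of pairs as the disjunction
   of its terms.  Classically, (Bp, Bc) is a rule for the truth function f as
   soon as f is the DNF over Bp and ~f the DNF over Bc.  Now let (Bp, Bc) be a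
   rule for C under |=_<= and feed C formulas of constant value 0 or 1 (they
   exist by constant expressivity).  Since a premise 1 or a conclusion 0 never
   helps to establish |=_<= when 0 <> 1, the rule forces C to take the value 1
   exactly when the DNF over Bp holds, and the value 0 exactly when the DNF
   over Bc holds.  So the restriction of C to {0, 1} is a classical connective
   obeying the same rule. *)

Definition term_holds n (B : {set 'I_n} * {set 'I_n}) (x : 'I_n -> bool) : bool :=
  [forall i in B.1, x i] && [forall j in B.2, ~~ x j].

Definition dnf n (Bs : {set {set 'I_n} * {set 'I_n}}) (x : 'I_n -> bool) : bool :=
  [exists B in Bs, term_holds B x].

Definition emptyP (T : Type) : T -> Prop := fun _ => False.
Arguments emptyP {T}.

Lemma vimage_emptyP (V S : Type) (ar : S -> nat) (I : forall c : S, ('I_(ar c) -> V) -> V)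
  (v : nat -> V) (a : V) : ~ vimage I v emptyP a.
Proof. by case=> F [[]]. Qed.

Section Classical.

Variable v : nat -> bool.

Notation cl_sem G D := (cl_rel (vimage cl_int v G) (vimage cl_int v D)).

Lemma cl_rel_add_l (G D : form cl_ar -> Prop) (F : form cl_ar) :
  cl_sem (set_add G F) D <-> (eval cl_int v F -> cl_sem G D).
Proof.
split=> [H vF HG | H HG].
  by apply: H => b [F' [[GF' | ->] <-]]; [apply: HG; exists F' | ].
apply: H => [|b [F' [GF' <-]]]; apply: HG; [exists F | exists F'].
  by split; [right |].
by split; [left |].
Qed.

Lemma cl_rel_add_r (G D : form cl_ar -> Prop) (F : form cl_ar) :
  cl_sem G (set_add D F) <-> (~~ eval cl_int v F -> cl_sem G D).
Proof.
split=> [H nF HG | H HG].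
  have [F' [[DF' | eF] e]] := H HG; first by exists F'.
  by move: nF; rewrite -eF e.
case vF: (eval cl_int v F); first by exists F; split; [right |].
by have [F' [DF' e]] := H (negbT vF) HG; exists F'; split; [left |].
Qed.

Lemma cl_rel_term n (Fs : 'I_n -> form cl_ar) (G D : form cl_ar -> Prop) B :
  cl_sem (set_union G (sel Fs B.1)) (set_union (sel Fs B.2) D) <->
  (term_holds B (fun i => eval cl_int v (Fs i)) -> cl_sem G D).
Proof.
split=> [H /andP [/forallP pos /forallP neg] HG | H HG].
  have [|F [[[j jB eF] | DF] e]] := H; last by exists F.
    move=> b [F [[GF | [i iB ->]] <-]]; first by apply: HG; exists F.
    exact: implyP (pos i) iB.
  by move: (implyP (neg j) jB); rewrite -eF e.
case: (boolP [exists j in B.2, eval cl_int v (Fs j)]) => [/existsP [j /andP [jB e]] | nj].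
  by exists (Fs j); split; [left; exists j |].
have [||F [DF e]] := H; last by exists F; split; [right |].
- apply/andP; split; apply/forallP => i; apply/implyP => iB.
    by apply: HG; exists (Fs i); split; [right; exists i |].
  by move/existsPn: nj => /(_ i); rewrite iB.
- by move=> b [F [GF <-]]; apply: HG; exists F; split; [left |].
Qed.

End Classical.

Lemma cl_entails_dnf n (Fs : 'I_n -> form cl_ar) (G D : form cl_ar -> Prop)
  (Bs : {set {set 'I_n} * {set 'I_n}}) :
  (forall B, B \in Bs -> cl_entails (set_union G (sel Fs B.1)) (set_union (sel Fs B.2) D)) <->
  (forall v, dnf Bs (fun i => eval cl_int v (Fs i)) ->
     cl_rel (vimage cl_int v G) (vimage cl_int v D)).
Proof.
split=> [H v /existsP [B /andP [BBs Bx]] | H B BBs v].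
  by apply: (cl_rel_term _ _ _ _ _).1 Bx; apply: H.
by apply/cl_rel_term => Bx; apply: H; apply/existsP; exists B; rewrite BBs.
Qed.

Lemma cl_rule_holds_dnf n (f : ('I_n -> bool) -> bool) (Bp Bc : {set {set 'I_n} * {set 'I_n}}) :
  (forall x, f x = dnf Bp x) -> (forall x, ~~ f x = dnf Bc x) ->
  rule_holds cl_entails (@App cl_sig cl_ar (existT _ n f)) Bp Bc.
Proof.
move=> fP fN G D Fs; split; split=> H.
- by apply/cl_entails_dnf => v; move/cl_rel_add_l: (H v); rewrite /= fP.
- by move/cl_entails_dnf in H => v; apply/cl_rel_add_l; rewrite /= fP; apply: H.
- by apply/cl_entails_dnf => v; move/cl_rel_add_r: (H v); rewrite /= fN.
- by move/cl_entails_dnf in H => v; apply/cl_rel_add_r; rewrite /= fN; apply: H.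
Qed.

Section OrderTheoretic.

Variables (d : Order.disp_t) (V : finTBPOrderType d).
Hypothesis bot_neq_top : (\bot : V) != \top.

Lemma ord_rel_drop (g g' dl dl' : V -> Prop) :
  (forall a, g a -> a = \top \/ g' a) -> (forall b, dl b -> b = \bot \/ dl' b) ->
  ord_rel g dl -> ord_rel g' dl'.
Proof.
have top_neq_bot : (\top : V) <> \bot by move=> e; move: bot_neq_top; rewrite e eqxx.
move=> gE dlE [[a [b [ga [dlb ab]]]] | [g0 | dl1]].
- have [a1 | g'a] := gE a ga; have [b0 | dl'b] := dlE b dlb.
  + by move: ab; rewrite a1 b0 lex0 => /eqP/top_neq_bot.
  + have b1 : b = \top by apply/le_anti; rewrite lex1 -a1.
    by right; right; rewrite -b1.
  + have a0 : a = \bot by apply/le_anti; rewrite le0x andbT -b0.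
    by right; left; rewrite -a0.
  + by left; exists a, b.
- by have [/esym | ] := gE _ g0; [ | right; left].
- by have [ | ] := dlE _ dl1; [ | right; right].
Qed.

Lemma ord_rel_emptyl (g dl : V -> Prop) : (forall a, ~ g a) -> ord_rel g dl -> dl \top.
Proof. by move=> g0 [[a [_ [/g0 []]]] | [/g0 [] | ]]. Qed.

Lemma ord_rel_emptyr (g dl : V -> Prop) : (forall b, ~ dl b) -> ord_rel g dl -> g \bot.
Proof. by move=> dl0 [[_ [b [_ [/dl0 []]]]] | [ | /dl0 []]]. Qed.

Variables (S : Type) (ar : S -> nat) (I : forall c : S, ('I_(ar c) -> V) -> V).

Notation ord_entails := (entails I (@ord_rel d V)).

Lemma ord_entails_add_add (G D : form ar -> Prop) (F : form ar) :
  ord_entails (set_add G F) (set_add D F).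
Proof.
move=> v; left; exists (eval I v F), (eval I v F).
by split; [| split]; [exists F; split; [right |] .. |].
Qed.

Variables (Kb Kt : form ar).
Hypotheses (eval_Kb : forall v, eval I v Kb = \bot) (eval_Kt : forall v, eval I v Kt = \top).

Definition const_form n (x : 'I_n -> bool) (i : 'I_n) : form ar := if x i then Kt else Kb.

Lemma eval_const_form v n (x : 'I_n -> bool) i :
  eval I v (const_form x i) = if x i then \top else \bot.
Proof. by rewrite /const_form; case: (x i). Qed.

Lemma ord_entails_unmatched n (G D : form ar -> Prop) B (x : 'I_n -> bool) :
  ~~ term_holds B x ->
  ord_entails (set_union G (sel (const_form x) B.1)) (set_union (sel (const_form x) B.2) D).
Proof.
rewrite negb_and => /orP [] /forallPn [i]; rewrite negb_imply => /andP [iB xi] v.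
  right; left; exists (const_form x i).
  by split; [right; exists i | rewrite eval_const_form (negbTE xi)].
right; right; exists (const_form x i).
by split; [left; exists i | rewrite eval_const_form (negbNE xi)].
Qed.

Lemma ord_rel_matched n (G D : form ar -> Prop) B (x : 'I_n -> bool) v :
  term_holds B x ->
  ord_entails (set_union G (sel (const_form x) B.1)) (set_union (sel (const_form x) B.2) D) ->
  ord_rel (vimage I v G) (vimage I v D).
Proof.
move=> /andP [/forallP pos /forallP neg] /(_ v); apply: ord_rel_drop.
  move=> a [F [[GF | [i iB ->]] <-]]; first by right; exists F.
  by left; rewrite eval_const_form (implyP (pos i) iB).
move=> b [F [[[j jB ->] | DF] <-]]; last by right; exists F.
by left; rewrite eval_const_form (negbTE (implyP (neg j) jB)).
Qed.

Variables (c : S) (Bp Bc : {set {set 'I_(ar c)} * {set 'I_(ar c)}}).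
Hypothesis rule_c : rule_holds ord_entails (@App S ar c) Bp Bc.
Variable v : nat -> V.

Lemma rule_dnf_premises (x : 'I_(ar c) -> bool) :
  (eval I v (@App S ar c (const_form x)) == \top) = dnf Bp x.
Proof.
pose C := @App S ar c (const_form x).
case: (boolP (dnf Bp x)) => [/existsP [B /andP [BBp Bx]] | nBp].
  have prem := (rule_c emptyP (set_add emptyP C) (const_form x)).1.1
    (ord_entails_add_add _ _ _) B BBp.
  have [F [[[] | ->] ->]] := ord_rel_emptyl (@vimage_emptyP _ _ _ I v) (ord_rel_matched v Bx prem).
  by rewrite eqxx.
have : ord_entails (set_add emptyP C) emptyP.
  apply/(rule_c _ _ _).1 => B BBp; apply: ord_entails_unmatched.
  by move/existsPn: nBp => /(_ B); rewrite BBp.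
move=> /(_ v) concl; have [F [[[] | ->] ->]] := ord_rel_emptyr (@vimage_emptyP _ _ _ I v) concl.
exact/negbTE.
Qed.

Lemma rule_dnf_conclusions (x : 'I_(ar c) -> bool) :
  (eval I v (@App S ar c (const_form x)) != \top) = dnf Bc x.
Proof.
pose C := @App S ar c (const_form x).
case: (boolP (dnf Bc x)) => [/existsP [B /andP [BBc Bx]] | nBc].
  have concl := (rule_c (set_add emptyP C) emptyP (const_form x)).2.1
    (ord_entails_add_add _ _ _) B BBc.
  have [F [[[] | ->] ->]] := ord_rel_emptyr (@vimage_emptyP _ _ _ I v) (ord_rel_matched v Bx concl).
  exact: bot_neq_top.
have : ord_entails emptyP (set_add emptyP C).
  apply/(rule_c _ _ _).2 => B BBc; apply: ord_entails_unmatched.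
  by move/existsPn: nBc => /(_ B); rewrite BBc.
move=> /(_ v) prem; have [F [[[] | ->] ->]] := ord_rel_emptyl (@vimage_emptyP _ _ _ I v) prem.
by rewrite eqxx.
Qed.

End OrderTheoretic.

Theorem theorem6p6 (d : Order.disp_t) (V : finTBPOrderType d)
  (S : Type) (ar : S -> nat) (I : forall c : S, ('I_(ar c) -> V) -> V) :
  (\bot : V) != \top ->
  constant_expressive I ->
  forall c : S,
    regular (entails I (@ord_rel d V)) (@App S ar c) ->
    exists (f : ('I_(ar c) -> bool) -> bool) Bp Bc,
      rule_holds (entails I (@ord_rel d V)) (@App S ar c) Bp Bc /\
      rule_holds cl_entails (@App cl_sig cl_ar (existT _ (ar c) f)) Bp Bc.
Proof.
move=> bot_neq_top const_expr c [Bp [Bc rule_c]].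
have [Kb eval_Kb] := const_expr \bot.
have [Kt eval_Kt] := const_expr \top.
(* Any valuation would do, the arguments being constant formulas. *)
pose v0 : nat -> V := fun _ => \bot.
exists (fun x => eval I v0 (@App S ar c (const_form Kb Kt x)) == \top), Bp, Bc; split=> //.
apply: cl_rule_holds_dnf => x.
  exact: (rule_dnf_premises bot_neq_top eval_Kb eval_Kt rule_c).
exact: (rule_dnf_conclusions bot_neq_top eval_Kb eval_Kt rule_c).
Qed.
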